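(* Let $\sigma>0$, $p\in(0,1)$ and $\delta\in(0,1)$. Let $\pi_0(z)=\sigma^{-2}z\,e^{-z^2/(2\sigma^2)}$ and $\pi_\delta(z)=\sigma^{-2}\delta^{-2}z\,e^{-z^2/(2\sigma^2\delta^2)}$ for $z\ge0$ (the densities of $\beta$ and $\delta\beta$ for $\beta\sim\mathrm{Rayleigh}(\sigma)$). Define $$G(\delta,\lambda)=\lambda p-\int_0^\infty\big(\lambda\pi_0(z)-\pi_\delta(z)\big)_+\,dz,\qquad (s)_+=\max\{0,s\}.$$ Then $\lambda\mapsto G(\delta,\lambda)$ attains its maximum over $\lambda\ge0$ at $\lambda_\delta=\delta^{-2}p^{(1-\delta^2)/\delta^2}$, and $$\max_{\lambda\ge0}G(\delta,\lambda)=p^{\delta^{-2}}.$$ Consequently, for $\gamma_1\in(0,1)$, $\min_{\delta\in[\gamma_1,1)}\max_{\lambda\ge0}G(\delta,\lambda)=p^{\gamma_1^{-2}}$ (as an infimum over $[\gamma_1,1)$), and $p^{\gamma_1^{-2}}>\tfrac12$ if and only if $\gamma_1>\sqrt{\log p/\log\tfrac12}$.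
   Context: A random variable $\zeta$ has the Rayleigh distribution with scale $\sigma>0$, written $\zeta\sim\mathrm{Rayleigh}(\sigma)$, if it has density $p_\zeta(z)=\sigma^{-2}z\,e^{-z^2/(2\sigma^2)}$ for $z\ge 0$ (and $0$ for $z<0$). *)

From mathcomp Require Import all_boot all_order all_algebra.
From mathcomp Require Import all_classical all_reals all_analysis.
Set Implicit Arguments. Unset Strict Implicit. Unset Printing Implicit Defensive.
Import Order.TTheory GRing.Theory Num.Theory.
Local Open Scope classical_set_scope.
Local Open Scope ring_scope.

Definition pi0 {R : realType} (sigma z : R) : R :=
  sigma ^- 2 * z * expR (- (z ^+ 2) / (2 * sigma ^+ 2)).

Definition pidelta {R : realType} (sigma delta z : R) : R :=
  sigma ^- 2 * delta ^- 2 * z * expR (- (z ^+ 2) / (2 * sigma ^+ 2 * delta ^+ 2)).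

Definition Gfun {R : realType} (sigma p delta lambda : R) : R :=
  lambda * p -
  Rintegral (@lebesgue_measure R) `[0, +oo[
    (fun z => Num.max 0 (lambda * pi0 sigma z - pidelta sigma delta z)).

Definition maxG {R : realType} (sigma p delta : R) : R :=
  sup [set Gfun sigma p delta l | l in `[0, +oo[].

From mathcomp Require Import all_boot all_order all_algebra.
From mathcomp Require Import all_classical all_reals all_analysis.
From mathcomp Require Import ring lra measurable_realfun.
Import Order.TTheory GRing.Theory Num.Theory.
Local Open Scope classical_set_scope.
Local Open Scope ring_scope.

(* Write k for a variance parameter and rayleigh_pdf k z = z/k exp(-z^2/(2k));
   then pi0 = rayleigh_pdf sigma^2, pidelta = rayleigh_pdf (sigma^2 delta^2),
   and the tail mass beyond a is exp(-a^2/(2k)), computed by the fundamental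
   theorem of calculus on [a, +oo[.
   For any integrable u on [0, +oo[ and any a >= 0, the integral of the
   positive part u^+ over [0, +oo[ dominates the integral of u over
   [a, +oo[, with equality when u changes sign (from - to +) at a.
   Applied to u = l pi0 - pidelta and to the point zs where the pi0-tail is p
   (the pidelta-tail there is p^(1/delta^2)), this gives
   G(delta, l) <= l p - (l p - p^(1/delta^2)) = p^(1/delta^2) for every l, with
   equality at l = lambda_opt, because lambda_opt pi0 - pidelta changes sign
   exactly at zs.  Hence max_l G = p^(1/delta^2); this value is nondecreasing
   in delta, so its infimum over [gamma1, 1[ is attained at gamma1, and
   comparing it with 1/2 is a computation with logarithms. *)

Lemma sup_attained {R : realType} (E : set R) (x : R) :
  E x -> ubound E x -> sup E = x.
Proof.
move=> Ex ubx; apply/eqP; rewrite eq_le ge_sup /=; last 2 first.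
- by exists x.
- exact: ubx.
by apply: ub_le_sup => //; exists x.
Qed.

Lemma inf_attained {R : realType} (E : set R) (x : R) :
  E x -> lbound E x -> inf E = x.
Proof.
move=> Ex lbx; apply/eqP; rewrite eq_le lb_le_inf /=; last 2 first.
- by exists x.
- exact: lbx.
by rewrite andbT; apply: ge_inf => //; exists x.
Qed.

Definition rayleigh_pdf {R : realType} (k z : R) : R :=
  k^-1 * z * expR (- (z ^+ 2) / (2 * k)).

Lemma pi0E {R : realType} (sigma : R) : pi0 sigma = rayleigh_pdf (sigma ^+ 2).
Proof. by []. Qed.

Lemma pideltaE {R : realType} (sigma delta : R) :
  pidelta sigma delta = rayleigh_pdf (sigma ^+ 2 * delta ^+ 2).
Proof.
by apply/funext => z; rewrite /pidelta /rayleigh_pdf (invfM (sigma ^+ 2)) [2 * (_ * _)]mulrA.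
Qed.

Section RayleighTail.
Context {R : realType} (k : R).
Hypothesis k_gt0 : 0 < k.
Let mu := @lebesgue_measure R.

Lemma rayleigh_pdf_ge0 z : 0 <= z -> 0 <= rayleigh_pdf k z.
Proof. by move=> z0; rewrite !mulr_ge0 ?expR_ge0 // invr_ge0 ltW. Qed.

Lemma continuous_rayleigh_pdf : continuous (fun z : R^o => rayleigh_pdf k z : R^o).
Proof.
by move=> z; apply: differentiable_continuous; apply/derivable1_diffP; exact: ex_derive.
Qed.

Lemma measurable_rayleigh_pdf : measurable_fun setT (rayleigh_pdf k).
Proof. exact: continuous_measurable_fun continuous_rayleigh_pdf. Qed.

Lemma is_derive_rayleigh_cdf (z : R) :
  is_derive z 1 (fun x : R => - expR (- (x ^+ 2) / (2 * k))) (rayleigh_pdf k z).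
Proof.
apply: is_derive_eq; rewrite /rayleigh_pdf scaler0 add0r /GRing.scale /=.
by field; rewrite gt_eqF.
Qed.

Lemma rayleigh_tail a : 0 <= a ->
  (\int[mu]_(z in `[a, +oo[) (rayleigh_pdf k z)%:E = (expR (- (a ^+ 2) / (2 * k)))%:E)%E.
Proof.
move=> a0; have cdf_cont : continuous (fun x : R^o => - expR (- (x ^+ 2) / (2 * k)) : R^o).
  by move=> z; apply: differentiable_continuous; apply/derivable1_diffP; exact: ex_derive.
rewrite (@ge0_continuous_FTC2y _ _ (fun x : R => - expR (- (x ^+ 2) / (2 * k))) _ 0).
- by rewrite sub0e EFinN oppeK.
- by move=> z az; apply: rayleigh_pdf_ge0; exact: le_trans az.
- exact: continuous_subspaceT continuous_rayleigh_pdf.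
- rewrite -oppr0; apply: cvgN.
  have -> : (fun x : R => expR (- (x ^+ 2) / (2 * k))) =
     (fun y => expR (- y)) \o (fun x => x ^+ 2 * (2 * k)^-1).
    by apply/funext => x /=; rewrite mulNr.
  apply: (@cvg_comp _ _ _ _ _ _ (pinfty_nbhs R)); last exact: cvgr_expR.
  by apply: gt0_cvgMly; [rewrite invr_gt0 mulr_gt0| exact: cvgr_expr2].
- by move=> z _; have cdf_der := is_derive_rayleigh_cdf z; exact: ex_derive.
- exact: cvg_at_right_filter (cdf_cont a).
- by move=> z _; have cdf_der := is_derive_rayleigh_cdf z; rewrite derive1E derive_val.
Qed.

(* Finite tail mass makes the density integrable on every tail. *)
Lemma integrable_rayleigh_pdf a : 0 <= a ->
  mu.-integrable `[a, +oo[ (EFin \o rayleigh_pdf k).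
Proof.
move=> a0; apply/integrableP; split.
  by apply/measurable_EFinP; exact: measurable_funS measurable_rayleigh_pdf.
suff -> : (\int[mu]_(z in `[a, +oo[) `|(EFin \o rayleigh_pdf k) z|)%E =
    (expR (- (a ^+ 2) / (2 * k)))%:E by exact: ltry.
rewrite -(@rayleigh_tail a a0); apply: eq_integral => z.
by rewrite inE /= in_itv /= andbT => az; rewrite ger0_norm // rayleigh_pdf_ge0 // (le_trans a0).
Qed.

Lemma Rintegral_rayleigh_tail a : 0 <= a ->
  \int[mu]_(z in `[a, +oo[) rayleigh_pdf k z = expR (- (a ^+ 2) / (2 * k)).
Proof. by move=> a0; rewrite /Rintegral rayleigh_tail. Qed.

End RayleighTail.

Section PositivePartIntegral.
Context {R : realType} {u : R -> R}.
Let mu := @lebesgue_measure R.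
Hypothesis u_int : mu.-integrable `[0, +oo[ (EFin \o u).

Let subset_tail (a : R) : 0 <= a -> `[a, +oo[ `<=` `[0, +oo[.
Proof. by move=> a0 x /=; rewrite !in_itv /= !andbT => /(le_trans a0). Qed.

Let integrable_pos : mu.-integrable `[0, +oo[ (EFin \o u^\+).
Proof. exact: integrable_funrpos. Qed.

Lemma Rintegral_funrpos_split {a : R} : 0 <= a ->
  \int[mu]_(z in `[0, +oo[) u^\+ z =
  \int[mu]_(z in `[0, a[) u^\+ z + \int[mu]_(z in `[a, +oo[) u^\+ z.
Proof.
move=> a0; rewrite -Rintegral_setU //.
- by rewrite -itv_bndbnd_setU // bnd_simp.
- by rewrite -itv_bndbnd_setU // bnd_simp.
- apply/disj_set2P; apply/seteqP; split => x //=; rewrite !in_itv /= andbT.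
  by move=> [/andP[_ xa] ax]; move: (lt_le_trans xa ax); rewrite ltxx.
Qed.

Lemma le_Rintegral_funrpos {a : R} : 0 <= a ->
  \int[mu]_(z in `[a, +oo[) u z <= \int[mu]_(z in `[0, +oo[) u^\+ z.
Proof.
move=> a0; rewrite (Rintegral_funrpos_split a0) -[X in X <= _]add0r.
apply: lerD; first by apply: Rintegral_ge0 => z _; exact: funrpos_ge0.
apply: le_Rintegral => //.
- by apply: integrableS u_int => //; exact: subset_tail.
- by apply: integrableS integrable_pos => //; exact: subset_tail.
- by move=> z _; rewrite /funrpos le_max lexx.
Qed.

Lemma Rintegral_funrpos_sign_change {a : R} : 0 <= a ->
  (forall z, 0 <= z < a -> u z <= 0) -> (forall z, a <= z -> 0 <= u z) ->
  \int[mu]_(z in `[0, +oo[) u^\+ z = \int[mu]_(z in `[a, +oo[) u z.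
Proof.
move=> a0 u_le0 u_ge0; rewrite (Rintegral_funrpos_split a0).
rewrite (eq_Rintegral _ (le0_funrposE _)); last first.
  by move=> z /=; rewrite in_itv /=; exact: u_le0.
rewrite (eq_Rintegral _ (ge0_funrposE _)); last first.
  by move=> z /=; rewrite in_itv /= andbT; exact: u_ge0.
by rewrite /Rintegral integral0 add0r.
Qed.

End PositivePartIntegral.

(* The point beyond which rayleigh_pdf k has mass p (for 0 < p <= 1). *)
Definition rayleigh_quantile {R : realType} (k p : R) : R := Num.sqrt (- (2 * k * ln p)).

Lemma rayleigh_quantile_sqr {R : realType} (k p : R) : 0 < k -> p <= 1 ->
  rayleigh_quantile k p ^+ 2 = - (2 * k * ln p).
Proof.
move=> k0 p1; rewrite sqr_sqrtr // oppr_ge0 mulr_ge0_le0 ?ln_le0 //.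
by rewrite mulr_ge0 // ltW.
Qed.

Lemma rayleigh_quantile_tail {R : realType} (k k' p : R) : 0 < k -> 0 < k' -> 0 < p <= 1 ->
  expR (- (rayleigh_quantile k p ^+ 2) / (2 * k')) = p `^ (k / k').
Proof.
move=> k0 k'0 /andP[p0 p1]; rewrite rayleigh_quantile_sqr // /powR gt_eqF //.
by congr expR; field; rewrite gt_eqF.
Qed.

Definition lambda_opt {R : realType} (p delta : R) : R :=
  delta ^- 2 * p `^ ((1 - delta ^+ 2) / delta ^+ 2).

Lemma lambda_opt_ge0 {R : realType} (p delta : R) : 0 <= lambda_opt p delta.
Proof. by rewrite mulr_ge0 ?powR_ge0 ?invr_ge0 ?sqr_ge0. Qed.

Section RayleighComparison.
Context {R : realType} {sigma p delta : R}.
Hypotheses (sigma_gt0 : 0 < sigma) (p01 : 0 < p < 1) (delta01 : 0 < delta < 1).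
Let mu := @lebesgue_measure R.
Let zs := rayleigh_quantile (sigma ^+ 2) p.
Let q := p `^ (delta ^- 2).
Let gap (l z : R) : R := l * pi0 sigma z - pidelta sigma delta z.

Let sigma2_gt0 : 0 < sigma ^+ 2. Proof. exact: exprn_gt0. Qed.
Let delta2_gt0 : 0 < delta ^+ 2. Proof. by case/andP: delta01 => d0 _; exact: exprn_gt0. Qed.
Let p_in : 0 < p <= 1. Proof. by case/andP: p01 => p0 p1; rewrite p0 ltW. Qed.

Let zs_ge0 : 0 <= zs. Proof. exact: sqrtr_ge0. Qed.

Lemma Rintegral_pi0_quantile : \int[mu]_(z in `[zs, +oo[) pi0 sigma z = p.
Proof.
rewrite pi0E Rintegral_rayleigh_tail // /zs rayleigh_quantile_tail // divff ?gt_eqF //.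
by rewrite powRr1 // ltW; case/andP: p01.
Qed.

Lemma Rintegral_pidelta_quantile : \int[mu]_(z in `[zs, +oo[) pidelta sigma delta z = q.
Proof.
have sd2_gt0 : 0 < sigma ^+ 2 * delta ^+ 2 by exact: mulr_gt0.
rewrite pideltaE Rintegral_rayleigh_tail // /zs rayleigh_quantile_tail //.
by rewrite /q invfM mulrA divff ?gt_eqF // mul1r.
Qed.

Let integrable_pi0 (a : R) : 0 <= a ->
  mu.-integrable `[a, +oo[ (EFin \o pi0 sigma).
Proof. by rewrite pi0E; exact: integrable_rayleigh_pdf. Qed.

Let integrable_pidelta (a : R) : 0 <= a ->
  mu.-integrable `[a, +oo[ (EFin \o pidelta sigma delta).
Proof. by rewrite pideltaE; apply: integrable_rayleigh_pdf; exact: mulr_gt0. Qed.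

Let integrable_scaled_pi0 (l a : R) : 0 <= a ->
  mu.-integrable `[a, +oo[ (EFin \o (fun z => l * pi0 sigma z)).
Proof.
move=> a0; have -> : EFin \o (fun z => l * pi0 sigma z) =
    (fun z => l%:E * (EFin \o pi0 sigma) z)%E by apply/funext => z; rewrite /= EFinM.
by apply: integrableZl => //; exact: integrable_pi0.
Qed.

Let integrable_gap (l a : R) : 0 <= a -> mu.-integrable `[a, +oo[ (EFin \o gap l).
Proof.
move=> a0; have -> : EFin \o gap l =
    (fun z => (EFin \o (fun z => l * pi0 sigma z)%R) z - (EFin \o pidelta sigma delta) z)%E.
  by apply/funext => z; rewrite /gap /= EFinB.
by apply: integrableB => //; [exact: integrable_scaled_pi0 | exact: integrable_pidelta].
Qed.

Lemma Rintegral_gap_quantile (l : R) : \int[mu]_(z in `[zs, +oo[) gap l z = l * p - q.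
Proof.
rewrite /gap RintegralB ?integrable_scaled_pi0 ?integrable_pidelta //.
by rewrite RintegralZl ?integrable_pi0 // Rintegral_pi0_quantile Rintegral_pidelta_quantile.
Qed.

Let e := (1 - delta ^+ 2) / delta ^+ 2.

Let e_gt0 : 0 < e.
Proof.
case/andP: delta01 => d0 d1.
by rewrite divr_gt0 // subr_gt0 expr_lt1 // ltW.
Qed.

Let rate_gt0 : 0 < e / (2 * sigma ^+ 2).
Proof. by rewrite divr_gt0 // mulr_gt0. Qed.

Let pidelta_ge0 z : 0 <= z -> 0 <= pidelta sigma delta z.
Proof. by rewrite pideltaE; apply: rayleigh_pdf_ge0; exact: mulr_gt0. Qed.

(* At lambda_opt the gap is pidelta times a factor with the sign of z^2 - zs^2. *)
Lemma gap_lambda_opt z : gap (lambda_opt p delta) z =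
  pidelta sigma delta z * (expR (e / (2 * sigma ^+ 2) * (z ^+ 2 - zs ^+ 2)) - 1).
Proof.
case/andP: p_in => p0 p1; rewrite /gap /lambda_opt -/e /powR gt_eqF //.
rewrite /zs rayleigh_quantile_sqr //.
have E : e * ln p + - (z ^+ 2) / (2 * sigma ^+ 2) = - (z ^+ 2) / (2 * sigma ^+ 2 * delta ^+ 2)
    + e / (2 * sigma ^+ 2) * (z ^+ 2 - - (2 * sigma ^+ 2 * ln p)).
  by rewrite /e; field; case/andP: delta01 => d0 _; rewrite !gt_eqF.
transitivity (sigma ^- 2 * delta ^- 2 * z * expR (e * ln p + - (z ^+ 2) / (2 * sigma ^+ 2))
   - pidelta sigma delta z); first by rewrite expRD /pi0; ring.
by rewrite E expRD /pidelta; ring.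
Qed.

Lemma gap_lambda_opt_le0 z : 0 <= z < zs -> gap (lambda_opt p delta) z <= 0.
Proof.
case/andP=> z0 zzs; rewrite gap_lambda_opt mulr_ge0_le0 ?pidelta_ge0 //.
by rewrite subr_le0 expR_le1 pmulr_rle0 // subr_le0 ler_sqr ?nnegrE // ltW.
Qed.

Lemma gap_lambda_opt_ge0 z : zs <= z -> 0 <= gap (lambda_opt p delta) z.
Proof.
move=> zsz; have z0 := le_trans zs_ge0 zsz.
rewrite gap_lambda_opt mulr_ge0 ?pidelta_ge0 // subr_ge0.
apply: le_trans (expR_ge1Dx _); rewrite lerDl pmulr_rge0 // subr_ge0.
by rewrite ler_sqr ?nnegrE.
Qed.

Lemma GfunE l : Gfun sigma p delta l = l * p - \int[mu]_(z in `[0, +oo[) (gap l)^\+ z.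
Proof. by congr (_ - _); apply: eq_Rintegral => z _; rewrite /funrpos maxC. Qed.

Lemma Gfun_le l : Gfun sigma p delta l <= q.
Proof.
have := le_Rintegral_funrpos (@integrable_gap l 0 (lexx 0)) zs_ge0.
by rewrite Rintegral_gap_quantile GfunE; lra.
Qed.

Lemma Gfun_lambda_opt : Gfun sigma p delta (lambda_opt p delta) = q.
Proof.
rewrite GfunE (Rintegral_funrpos_sign_change (@integrable_gap _ 0 (lexx 0)) zs_ge0).
- by rewrite Rintegral_gap_quantile; lra.
- exact: gap_lambda_opt_le0.
- exact: gap_lambda_opt_ge0.
Qed.

Lemma maxG_eq : maxG sigma p delta = q.
Proof.
apply: sup_attained; last by move=> _ [l _ <-]; exact: Gfun_le.
exists (lambda_opt p delta); last exact: Gfun_lambda_opt.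
by rewrite /= in_itv /= andbT lambda_opt_ge0.
Qed.

End RayleighComparison.

Lemma powR_invsqr_le {R : realType} (p g d : R) : 0 < p <= 1 -> 0 < g <= d ->
  p `^ (g ^- 2) <= p `^ (d ^- 2).
Proof.
move=> p01 /andP[g0 gd]; have d0 := lt_le_trans g0 gd.
apply: ger_powR => //; rewrite lef_pV2 ?posrE ?exprn_gt0 //.
by rewrite ler_sqr // nnegrE ltW.
Qed.

Lemma half_lt_powR_invsqr {R : realType} (p g : R) : 0 < p < 1 -> 0 < g ->
  (1 / 2 < p `^ (g ^- 2)) = (Num.sqrt (ln p / ln (1 / 2)) < g).
Proof.
move=> /andP[p0 p1] g0.
have lnp_lt0 : ln p < 0 by apply: ln_lt0; rewrite p0 p1.
have lnh_lt0 : ln (1 / 2 : R) < 0 by apply: ln_lt0; rewrite divr_gt0 // ltr_pdivrMr //; lra.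
have g2_gt0 : 0 < g ^+ 2 by rewrite exprn_gt0.
rewrite -[in LHS](@lnK _ (1 / 2)) ?posrE ?divr_gt0 // /powR gt_eqF // ltr_expR.
have -> : (Num.sqrt (ln p / ln (1 / 2)) < g) = (ln p / ln (1 / 2) < g ^+ 2).
  by rewrite -[in RHS]ltr_sqrt // sqrtr_sqr ger0_norm // ltW.
by rewrite ltr_ndivrMr // [g ^- 2 * _]mulrC ltr_pdivlMr // [g ^+ 2 * _]mulrC.
Qed.

Theorem mainTheorem6 (R : realType) (sigma p : R) :
  0 < sigma -> 0 < p < 1 ->
  (forall delta : R, 0 < delta < 1 ->
     let lam := delta ^- 2 * p `^ ((1 - delta ^+ 2) / delta ^+ 2) in
     0 <= lam /\
     (forall l : R, 0 <= l -> Gfun sigma p delta l <= Gfun sigma p delta lam) /\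
     Gfun sigma p delta lam = p `^ (delta ^- 2) /\
     maxG sigma p delta = p `^ (delta ^- 2)) /\
  (forall gamma1 : R, 0 < gamma1 < 1 ->
     inf [set maxG sigma p d | d in `[gamma1, 1[] = p `^ (gamma1 ^- 2) /\
     (1 / 2 < p `^ (gamma1 ^- 2) <-> Num.sqrt (ln p / ln (1 / 2)) < gamma1)).
Proof.
move=> sigma_gt0 p01; have /andP[p_gt0 p_lt1] := p01; split.
  move=> delta delta01 lam; rewrite /lam -/(lambda_opt p delta).
  rewrite (Gfun_lambda_opt sigma_gt0 p01 delta01) (maxG_eq sigma_gt0 p01 delta01).
  split; first exact: lambda_opt_ge0.
  by split => // l _; exact: Gfun_le.
move=> gamma gamma01; have /andP[gamma_gt0 gamma_lt1] := gamma01.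
split; last by rewrite half_lt_powR_invsqr.
apply: inf_attained.
  exists gamma; last exact: maxG_eq sigma_gt0 p01 gamma01.
  by rewrite /= in_itv /= lexx gamma_lt1.
move=> x [d]; rewrite /= in_itv /= => /andP[gamma_le_d d_lt1] <-.
have d01 : 0 < d < 1 by rewrite (lt_le_trans gamma_gt0 gamma_le_d) d_lt1.
rewrite (maxG_eq sigma_gt0 p01 d01); apply: powR_invsqr_le.
- by rewrite p_gt0 ltW.
- by rewrite gamma_gt0 gamma_le_d.
Qed.
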